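(* Let $a_1<a_2$ be positive integers and let $g=\gcd(a_1,a_2)$. For generic $(c_1,c_2)\in\mathbb{C}^2$, the number of common solutions $(x_1,x_2)\in\mathbb{C}^2$ of the equations $x_1^{a_1}+x_2^{a_1}=c_1$ and $x_1^{a_2}+x_2^{a_2}=c_2$ equals $a_1(a_2-g)$ if both $a_1/g$ and $a_2/g$ are odd, and equals $a_1a_2$ otherwise. *)

From HB Require Import structures.
From mathcomp Require Import all_boot all_order all_algebra.
From mathcomp Require Import Rstruct complex.
From Stdlib Require Import Rdefinitions.
Set Implicit Arguments. Unset Strict Implicit. Unset Printing Implicit Defensive.
Import Order.TTheory GRing.Theory Num.Theory.
Local Open Scope ring_scope.

Definition C : Type := (Rdefinitions.R)[i].

Definition is_solution (a1 a2 : nat) (c1 c2 : C) (x : C * C) : Prop :=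
  x.1 ^+ a1 + x.2 ^+ a1 = c1 /\ x.1 ^+ a2 + x.2 ^+ a2 = c2.

Definition num_solutions_eq (a1 a2 : nat) (c1 c2 : C) (N : nat) : Prop :=
  exists s : seq (C * C), uniq s /\ size s = N /\
    (forall x : C * C, x \in s <-> is_solution a1 a2 c1 c2 x).

(* Evaluation of a bivariate polynomial P(y1, y2), encoded as a polynomial in
   y2 with coefficients polynomials in y1, at the point (c1, c2). *)
Definition eval2 (P : {poly {poly C}}) (c1 c2 : C) : C := (P.[c2%:P]).[c1].

(* A property holds for generic (c1, c2) in C^2: it holds outside the zero
   locus of some nonzero polynomial (a proper Zariski-closed subset). *)
Definition generically (Q : C -> C -> Prop) : Prop :=
  exists P : {poly {poly C}}, P != 0 /\
    forall c1 c2 : C, eval2 P c1 c2 != 0 -> Q c1 c2.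

From mathcomp Require Import all_boot all_order all_algebra separable.
From mathcomp Require Import Rstruct complex ring zify.
Import Order.TTheory GRing.Theory Num.Theory.
Local Open Scope ring_scope.

(* Write a1 = b1 g and a2 = b2 g with b1, b2 coprime.  At a solution,
   x2^(a1 b2) = x2^(a2 b1) makes x1 a root of the resolvent
   F(t) = (c1 - t^a1)^b2 - (c2 - t^a2)^b1.  Conversely, over a root t of F and when
   c1^b2 != c2^b1, a Bezout relation u b1 = v b2 + 1 turns the two conditions
   x2^a1 = c1 - t^a1 and x2^a2 = c2 - t^a2 into x2^g = w(t) for an explicit
   w(t) != 0, which has exactly g solutions.  Hence a separable F gives g deg(F)
   solutions.  Generically deg(F) = a1 b2, except when b1 and b2 are both odd: then
   the terms in t^(a1 b2) cancel and deg(F) = a1 (b2 - 1) as long as c1 != 0.  All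
   these conditions hold off the zero set of c1 (c1^b2 - c2^b1) Res(F, F') computed
   for the generic resolvent, a polynomial that is nonzero because F has no multiple
   root at (c1, c2) = (1, 0). *)

Section SeparableRoots.
Context {F : closedFieldType}.

Definition roots_seq (p : {poly F}) : seq F := sval (closed_field_poly_normal p).

Lemma roots_seqP {p : {poly F}} : separable_poly p ->
  [/\ uniq (roots_seq p), size (roots_seq p) = (size p).-1
    & forall x, (x \in roots_seq p) = root p x].
Proof.
move=> sep_p; rewrite /roots_seq; case: closed_field_poly_normal => rs /= def_p.
have lc_neq0 : lead_coef p != 0 by rewrite lead_coef_eq0 separable_poly_neq0.
split.
- rewrite -separable_prod_XsubC; apply: dvdp_separable sep_p.
  by rewrite {1}def_p dvdpZr.
- by rewrite {1}def_p size_scale // size_prod_XsubC.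
- by move=> x; rewrite {1}def_p rootZ // root_prod_XsubC.
Qed.

Lemma separable_XnsubC {n : nat} {w : F} : n%:R != 0 :> F -> w != 0 ->
  separable_poly ('X^n - w%:P).
Proof.
move=> n_neq0 w_neq0; rewrite unlock /separable_poly.
apply: Pdiv.ClosedField.root_coprimep => x.
rewrite rootE derivB derivC subr0 derivXn !hornerE subr_eq0 => /eqP xn_w.
rewrite hornerMn hornerXn -mulr_natr mulf_neq0 // expf_neq0 //.
apply: contraNneq w_neq0 => x0; rewrite -xn_w x0 expr0n.
by case: n n_neq0 {xn_w} => [/eqP|].
Qed.

End SeparableRoots.

Lemma coprimep_resultant {R : idomainType} {p : {poly R}} (q : {poly R}) :
  p != 0 -> coprimep p q = (resultant p q != 0).
Proof.
move=> p_neq0; rewrite resultant_eq0 coprimep_def -leqNgt.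
have : gcdp p q != 0 by rewrite gcdp_eq0 negb_and p_neq0.
by rewrite -size_poly_gt0; case: (size _) => [|[|]].
Qed.

Lemma lead_coef_deriv {R : nzRingType} (p : {poly R}) :
  lead_coef p *+ (size p).-1 != 0 -> lead_coef p^`() = lead_coef p *+ (size p).-1.
Proof.
case sp: (size p) => [|[|n]] /=; rewrite ?mulr0n ?eqxx // => lc_neq0.
have coef_n : p^`()`_n = lead_coef p *+ n.+1 by rewrite coef_deriv lead_coefE sp.
have size_dp : size p^`() = n.+1.
  apply/anti_leq; rewrite -ltnS -sp lt_size_deriv -?size_poly_gt0 ?sp //=.
  rewrite ltnNge; apply: contra lc_neq0 => /leq_sizeP/(_ n (leqnn n)).
  by rewrite coef_n => ->.
by rewrite lead_coefE size_dp.
Qed.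

Lemma size_lead_coef_subZXn {R : idomainType} {p : {poly R}} {k : R} {n : nat} :
  k != 0 -> (size (p - k *: 'X^n)%R <= n)%N -> size p = n.+1 /\ lead_coef p = k.
Proof.
move=> k_neq0 small; rewrite -[p](subrK (k *: 'X^n)).
have size_kXn : size (k *: 'X^n) = n.+1 by rewrite size_scale // size_polyXn.
have lt_rest : (size (p - k *: 'X^n)%R < size (k *: 'X^n))%N by rewrite size_kXn.
by rewrite addrC size_polyDl // lead_coefDl // lead_coefZ lead_coefXn mulr1.
Qed.

Lemma size_CsubXn_exprS_top {R : comNzRingType} (a b : nat) (c : R) : (0 < a)%N ->
  (size ((c%:P - 'X^a) ^+ b.+1 - ((-1) ^+ b.+1 *: 'X^(a * b.+1)
     + ((-1) ^+ b * c *+ b.+1) *: 'X^(a * b)))%R <= a * b)%N.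
Proof.
move=> a_gt0; set P := c%:P - 'X^a.
have size_P : size P = a.+1 by rewrite /P -opprB size_polyN size_XnsubC.
elim: b => [|b IHb].
  rewrite /P expr1 muln0 muln1 expr0 mul1r mulr1n scale_polyC scaleN1r mulr1.
  by rewrite (_ : _ - _ - _ = 0) ?size_poly0 //; ring.
set r := _ - _ in IHb.
have -> : P ^+ b.+2 - ((-1) ^+ b.+2 *: 'X^(a * b.+2)
    + ((-1) ^+ b.+1 * c *+ b.+2) *: 'X^(a * b.+1))
    = P * r + ((-1) ^+ b * c ^+ 2 *+ b.+1) *: 'X^(a * b).
  rewrite /r /P !mulnS !exprD -!mul_polyC !rmorphMn !rmorphM !rmorphXn rmorphN1 /=.
  by rewrite !exprS; ring.
apply: leq_trans (size_polyD _ _) _; rewrite geq_max; apply/andP; split.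
  apply: leq_trans (size_polyMleq _ _) _.
  by rewrite size_P addSn /= mulnS leq_add2l.
apply: leq_trans (size_scale_leq _ _) _.
by rewrite size_polyXn mulnS addnC -addn1 leq_add2l.
Qed.

Lemma deriv_CsubXn_exp_mulX {R : comNzRingType} (c : R) (a b : nat) :
  ((c%:P - 'X^a) ^+ b)^`() * 'X = - ((a * b)%:R *: ('X^a * (c%:P - 'X^a) ^+ b.-1)).
Proof.
rewrite deriv_exp derivB derivC derivXn sub0r -mul_polyC polyCMn.
case: a => [|a] /=; first by rewrite !mulr0n !(mul0rn, mul0r, mulr0n, oppr0, rmorph0).
by rewrite exprSr; ring.
Qed.

Lemma coprime_exp_eqP {F : fieldType} {b1 b2 u v : nat} {A B : F} :
  (u * b1 = v * b2 + 1)%N -> A != 0 -> A ^+ b2 = B ^+ b1 ->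
  forall y, y ^+ b1 = A /\ y ^+ b2 = B <-> y = A ^+ u / B ^+ v.
Proof.
move=> uv A_neq0 AB y.
have b1_gt0 : (0 < b1)%N by case: (b1) uv => //; rewrite muln0 addn1.
have B_neq0 : B != 0.
  apply: contraNneq A_neq0 => B0; move/eqP: AB.
  by rewrite B0 expr0n gtn_eqF // expf_eq0 => /andP[].
have Bv_neq0 : B ^+ v != 0 by rewrite expf_neq0.
have exp_uv (z : F) : z ^+ (u * b1) = z ^+ (v * b2) * z by rewrite uv addn1 exprSr.
split=> [[yA yB] | ->].
  apply/esym/(canLR (mulfK Bv_neq0)).
  by rewrite -yA -yB -!exprM [(b1 * u)%N]mulnC exp_uv [(b2 * v)%N]mulnC mulrC.
rewrite !exprMn !exprVn -!exprM; split.
  rewrite exp_uv [(v * b2)%N]mulnC exprM AB -exprM mulnC.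
  by rewrite mulrAC mulfV ?mul1r // expf_neq0.
rewrite [(u * b2)%N]mulnC exprM AB -exprM mulnC exp_uv.
by rewrite mulrAC mulfV ?mul1r // expf_neq0.
Qed.

Lemma size_allpairs_dep_const {S : eqType} {T U : Type} {f : S -> T -> U}
    {s : seq S} {t : S -> seq T} (n : nat) :
  {in s, forall x, size (t x) = n} ->
  size [seq f x y | x <- s, y <- t x] = (size s * n)%N.
Proof.
rewrite size_allpairs_dep; elim: s => //= x s IHs size_t.
rewrite size_t ?mem_head // IHs ?mulSn // => y s_y.
by apply: size_t; rewrite inE s_y orbT.
Qed.

Section Resolvent.
Variables a1 a2 : nat.
Hypotheses (a1_gt0 : (0 < a1)%N) (lt_a12 : (a1 < a2)%N).

Let g := gcdn a1 a2.
Let b1 := (a1 %/ g)%N.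
Let b2 := (a2 %/ g)%N.

Let g_gt0 : (0 < g)%N. Proof. by rewrite gcdn_gt0 a1_gt0. Qed.
Let a1E : a1 = (b1 * g)%N. Proof. by rewrite divnK ?dvdn_gcdl. Qed.
Let a2E : a2 = (b2 * g)%N. Proof. by rewrite divnK ?dvdn_gcdr. Qed.
Let b1_gt0 : (0 < b1)%N. Proof. by move: a1_gt0; rewrite a1E muln_gt0 => /andP[]. Qed.
Let lt_b12 : (b1 < b2)%N. Proof. by move: lt_a12; rewrite a1E a2E ltn_pmul2r. Qed.
Let b2_gt0 : (0 < b2)%N. Proof. exact: ltn_trans b1_gt0 lt_b12. Qed.
Let coprime_b12 : coprime b1 b2.
Proof. by rewrite /coprime -(eqn_pmul2r g_gt0) muln_gcdl -a1E -a2E mul1n. Qed.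
Let a1b2E : (a1 * b2 = a2 * b1)%N. Proof. by rewrite a1E a2E; ring. Qed.
Let lt_a2b1_a1b2 : (a2 * b1.-1 < a1 * b2.-1)%N.
Proof.
have := leq_pmulr a2 b1_gt0; rewrite -!subn1 !mulnBr !muln1 -a1b2E.
by move: lt_a12; lia.
Qed.

Definition resolvent {R : comNzRingType} (c1 c2 : R) : {poly R} :=
  (c1%:P - 'X^a1) ^+ b2 - (c2%:P - 'X^a2) ^+ b1.

Definition resolvent_deg : nat := if odd b1 && odd b2 then a1 * b2.-1 else a1 * b2.

Definition resolvent_lead {R : comNzRingType} (c1 : R) : R :=
  if odd b1 && odd b2 then c1 *+ b2 else (-1) ^+ b2 - (-1) ^+ b1.

Lemma resolvent_deg_gt0 : (0 < resolvent_deg)%N.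
Proof.
have lt1_b2 : (1 < b2)%N := leq_ltn_trans b1_gt0 lt_b12.
by rewrite /resolvent_deg; case: ifP => _; rewrite muln_gt0 a1_gt0 /=; lia.
Qed.

Lemma resolvent_top_terms {R : comNzRingType} (c1 c2 : R) :
  exists2 r : {poly R}, resolvent c1 c2
    = ((-1) ^+ b2 - (-1) ^+ b1) *: 'X^(a1 * b2)
      + ((-1) ^+ b2.-1 * c1 *+ b2) *: 'X^(a1 * b2.-1)
      - ((-1) ^+ b1.-1 * c2 *+ b1) *: 'X^(a2 * b1.-1) + r
    & (size r <= a1 * b2.-1)%N.
Proof.
have := size_CsubXn_exprS_top a1 b2.-1 c1 a1_gt0.
have := size_CsubXn_exprS_top a2 b1.-1 c2 (ltn_trans a1_gt0 lt_a12).
rewrite !prednK // -a1b2E; set r1 := _ - _; set r2 := _ - _ => size_r1 size_r2.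
exists (r2 - r1); first by rewrite /resolvent /r1 /r2 scalerBl; ring.
rewrite (leq_trans (size_polyD _ _)) // geq_max size_r2 size_polyN.
exact: leq_trans size_r1 (ltnW lt_a2b1_a1b2).
Qed.

Lemma size_resolvent_sub_lead {R : comNzRingType} (c1 c2 : R) :
  (size (resolvent c1 c2 - resolvent_lead c1 *: 'X^resolvent_deg)%R
     <= resolvent_deg)%N.
Proof.
have [r resolventE size_r] := resolvent_top_terms c1 c2.
have size_ZXn (k : R) n : (size (k *: 'X^n)%R <= n.+1)%N.
  by rewrite (leq_trans (size_scale_leq _ _)) ?size_polyXn.
have leq_sizeD (p q : {poly R}) n :
    (size p <= n)%N -> (size q <= n)%N -> (size (p + q)%R <= n)%N.
  by move=> sp sq; rewrite (leq_trans (size_polyD _ _)) // geq_max sp.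
rewrite /resolvent_deg /resolvent_lead; case: ifP => [/andP[odd_b1 odd_b2] | _].
  have sign_odd n : odd n -> (-1) ^+ n = -1 :> R by rewrite -signr_odd => ->.
  have sign_b2 : (-1) ^+ b2.-1 = 1 :> R.
    by rewrite -signr_odd; move: odd_b2; rewrite -{1}(prednK b2_gt0) /= => /negbTE ->.
  have -> : resolvent c1 c2 - (c1 *+ b2) *: 'X^(a1 * b2.-1)
      = - (((-1) ^+ b1.-1 * c2 *+ b1) *: 'X^(a2 * b1.-1)) + r.
    rewrite resolventE sign_b2 mul1r (sign_odd b2) // (sign_odd b1) //.
    by rewrite subrr scale0r add0r; ring.
  by apply: (leq_sizeD) => //; rewrite size_polyN (leq_trans (size_ZXn _ _)).
have -> : resolvent c1 c2 - ((-1) ^+ b2 - (-1) ^+ b1) *: 'X^(a1 * b2)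
    = ((-1) ^+ b2.-1 * c1 *+ b2) *: 'X^(a1 * b2.-1)
      - ((-1) ^+ b1.-1 * c2 *+ b1) *: 'X^(a2 * b1.-1) + r.
  by rewrite resolventE; ring.
have lt_a1b2 : (a1 * b2.-1 < a1 * b2)%N by rewrite ltn_pmul2l // prednK // leqnn.
apply: (leq_sizeD); last exact: leq_trans size_r (ltnW lt_a1b2).
apply: (leq_sizeD); rewrite ?size_polyN (leq_trans (size_ZXn _ _)) //.
exact: ltn_trans lt_a2b1_a1b2 lt_a1b2.
Qed.

Lemma resolvent_lead_neq0 {R : numDomainType} {c1 : R} :
  c1 != 0 -> resolvent_lead c1 != 0.
Proof.
move=> c1_neq0; rewrite /resolvent_lead; case: ifPn => [_ | not_both_odd].
  by rewrite mulrn_eq0 negb_or c1_neq0 -lt0n b2_gt0.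
have odd_b12 : odd b1 != odd b2.
  apply: contraL coprime_b12 => /eqP odd_b12.
  have even_b1 : ~~ odd b1 by apply: contra not_both_odd; rewrite -odd_b12 andbb.
  rewrite /coprime; apply/eqP => gcd_eq1.
  have : (2 %| gcdn b1 b2)%N by rewrite dvdn_gcd !dvdn2 -odd_b12 even_b1.
  by rewrite gcd_eq1.
rewrite -signr_odd -[(-1) ^+ b1]signr_odd.
case: (odd b1) (odd b2) odd_b12 => [] [] //= _.
  by rewrite opprK -mulr2n pnatr_eq0.
by rewrite -opprD oppr_eq0 -mulr2n pnatr_eq0.
Qed.

Lemma root_resolvent {R : comNzRingType} (c1 c2 t : R) :
  root (resolvent c1 c2) t = ((c1 - t ^+ a1) ^+ b2 == (c2 - t ^+ a2) ^+ b1).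
Proof.
by rewrite rootE /resolvent !(hornerD, hornerN, horner_exp, hornerC, hornerX) subr_eq0.
Qed.

Lemma root_resolvent_solution {R : comNzRingType} {c1 c2 t x : R} :
  t ^+ a1 + x ^+ a1 = c1 -> t ^+ a2 + x ^+ a2 = c2 -> root (resolvent c1 c2) t.
Proof.
move=> <- <-; rewrite root_resolvent ![t ^+ _ + _]addrC !addrK -!exprM.
by rewrite a1b2E.
Qed.

(* With p = 1 - t^a1 and q = -t^a2, one has t F'(t) = -a1 b2 (t^a1 p^(b2-1) + q^b1),
   so at a root (p^b2 = q^b1) p t F'(t) = -a1 b2 q^b1, which vanishes only at t = 0,
   and t = 0 is not a root. *)
Lemma separable_resolvent_1_0 (F : numClosedFieldType) :
  separable_poly (resolvent (1 : F) 0).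
Proof.
rewrite unlock /separable_poly; apply: Pdiv.ClosedField.root_coprimep => t.
have tdF : t * (resolvent 1 0)^`().[t]
    = - (a1 * b2)%:R * (t ^+ a1 * (1 - t ^+ a1) ^+ b2.-1 + (- t ^+ a2) ^+ b1).
  rewrite mulrC -hornerMX /resolvent derivB mulrBl !deriv_CsubXn_exp_mulX.
  rewrite !(hornerD, hornerN, hornerZ, hornerM, hornerXn, horner_exp, hornerC).
  have qE : (- t ^+ a2) ^+ b1 = - t ^+ a2 * (- t ^+ a2) ^+ b1.-1.
    by rewrite -exprS prednK.
  by rewrite sub0r -a1b2E qE; ring.
rewrite root_resolvent sub0r => /eqP pq.
have t_neq0 : t != 0.
  apply: contra_eqN pq => /eqP ->.
  rewrite !expr0n (gtn_eqF a1_gt0) (gtn_eqF (ltn_trans a1_gt0 lt_a12)) !mulr0n.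
  by rewrite subr0 oppr0 expr1n expr0n gtn_eqF // oner_neq0.
set p := 1 - t ^+ a1 in tdF pq; set q := - t ^+ a2 in tdF pq.
have pdF : p * (t * (resolvent 1 0)^`().[t]) = - (a1 * b2)%:R * q ^+ b1.
  have pE : p ^+ b2 = p * p ^+ b2.-1 by rewrite -exprS prednK.
  by rewrite tdF mulrCA mulrDr mulrCA -pE pq /p; ring.
have : - (a1 * b2)%:R * q ^+ b1 != 0.
  have L_neq0 : (a1 * b2)%:R != 0 :> F by rewrite pnatr_eq0 -lt0n muln_gt0 a1_gt0.
  by rewrite mulf_neq0 ?oppr_eq0 // expf_neq0 // oppr_eq0 expf_neq0.
by apply: contraNneq => dF0; rewrite -pdF dF0 !mulr0.
Qed.

Let bezout_b12 : ((egcdn b1 b2).1 * b1 = (egcdn b1 b2).2 * b2 + 1)%N.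
Proof. by case: (egcdnP b2 b1_gt0) => u v /= -> _; rewrite (eqP coprime_b12). Qed.

Definition fiber_pow {F : fieldType} (c1 c2 t : F) : F :=
  (c1 - t ^+ a1) ^+ (egcdn b1 b2).1 / (c2 - t ^+ a2) ^+ (egcdn b1 b2).2.

Lemma fiber_powP {F : fieldType} {c1 c2 t : F} :
  c1 ^+ b2 != c2 ^+ b1 -> root (resolvent c1 c2) t ->
  fiber_pow c1 c2 t != 0 /\
  forall x, t ^+ a1 + x ^+ a1 = c1 /\ t ^+ a2 + x ^+ a2 = c2
            <-> x ^+ g = fiber_pow c1 c2 t.
Proof.
move=> c12 root_t; set A := c1 - t ^+ a1; set B := c2 - t ^+ a2.
have AB : A ^+ b2 = B ^+ b1 by apply/eqP; rewrite -root_resolvent.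
have A_neq0 : A != 0.
  apply: contraNneq c12 => A0.
  have B0 : B == 0.
    by move/eqP: AB; rewrite A0 expr0n gtn_eqF // eq_sym expf_eq0 b1_gt0.
  move/eqP: A0 B0; rewrite /A /B !subr_eq0 => /eqP -> /eqP ->.
  by rewrite -!exprM a1b2E.
have powE := coprime_exp_eqP bezout_b12 A_neq0 AB.
split.
  have [wA _] := (powE (fiber_pow c1 c2 t)).2 erefl.
  by apply: contraNneq A_neq0 => w0; rewrite -wA w0 expr0n gtn_eqF.
have addr_eq (u y c : F) : u + y = c <-> y = c - u.
  by split=> [<- | ->]; [rewrite [u + y]addrC addrK | rewrite addrC subrK].
move=> x; apply: iff_trans (powE (x ^+ g)).
rewrite -!exprM [(g * _)%N]mulnC -a1E [(g * _)%N]mulnC -a2E.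
by split=> -[/addr_eq ? /addr_eq ?].
Qed.

Lemma num_solutions_resolvent {c1 c2 : C} :
  separable_poly (resolvent c1 c2) -> c1 ^+ b2 != c2 ^+ b1 ->
  num_solutions_eq a1 a2 c1 c2 (g * (size (resolvent c1 c2)).-1).
Proof.
move=> sepF c12; have [uniqF sizeF memF] := roots_seqP sepF.
pose fiber t := roots_seq ('X^g - (fiber_pow c1 c2 t)%:P).
have fiberP t : root (resolvent c1 c2) t -> [/\ uniq (fiber t), size (fiber t) = g
    & forall x, (x \in fiber t) = (x ^+ g == fiber_pow c1 c2 t)].
  move=> root_t; have [w_neq0 _] := fiber_powP c12 root_t.
  have g_neq0 : g%:R != 0 :> C by rewrite pnatr_eq0 -lt0n.
  have [uniq_f size_f mem_f] := roots_seqP (separable_XnsubC g_neq0 w_neq0).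
  split=> // [|x]; first by rewrite size_f size_XnsubC.
  by rewrite mem_f rootE !hornerE subr_eq0.
exists [seq (t, x) | t <- roots_seq (resolvent c1 c2), x <- fiber t].
split; [|split].
- apply: allpairs_uniq_dep => // [t | [t1 x1] [t2 x2] _ _ [-> ->]] //.
  by rewrite memF => /fiberP[].
- rewrite (size_allpairs_dep_const g) ?sizeF 1?mulnC // => t.
  by rewrite memF => /fiberP[].
move=> [t x]; rewrite /is_solution /=; split.
  move=> /allpairsPdep[t' [x' [+ + [-> ->]]]]; rewrite memF => root_t.
  have [_ _ mem_f] := fiberP _ root_t.
  by rewrite mem_f => /eqP /(fiber_powP c12 root_t).2.
move=> [e1 e2]; have root_t := root_resolvent_solution e1 e2.
have [_ _ mem_f] := fiberP _ root_t.
apply/allpairsPdep; exists t, x; rewrite memF mem_f; split=> //.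
by apply/eqP/(fiber_powP c12 root_t).2.
Qed.

Definition eval2_morph (c1 c2 : C) : {rmorphism {poly {poly C}} -> C} :=
  horner_eval c1 \o horner_eval c2%:P.

Lemma eval2_morphE (c1 c2 : C) (P : {poly {poly C}}) :
  eval2_morph c1 c2 P = eval2 P c1 c2.
Proof. by []. Qed.

Lemma eval2_morph_X1 (c1 c2 : C) : eval2_morph c1 c2 'X%:P = c1.
Proof. by rewrite eval2_morphE /eval2 hornerC hornerX. Qed.

Lemma eval2_morph_X2 (c1 c2 : C) : eval2_morph c1 c2 'X = c2.
Proof. by rewrite eval2_morphE /eval2 hornerX hornerC. Qed.

(* In {poly {poly C}}, as in [eval2], the inner variable 'X%:P stands for c1 and the
   outer variable 'X for c2. *)
Definition generic_resolvent : {poly {poly {poly C}}} := resolvent 'X%:P 'X.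

Definition exceptional_poly : {poly {poly C}} :=
  resultant generic_resolvent generic_resolvent^`() * 'X%:P * ('X%:P ^+ b2 - 'X ^+ b1).

Lemma map_generic_resolvent (c1 c2 : C) :
  map_poly (eval2_morph c1 c2) generic_resolvent = resolvent c1 c2.
Proof.
rewrite /generic_resolvent /resolvent rmorphB /= !rmorphXn /= !rmorphB /=.
by rewrite !map_polyC !map_polyXn /= !horner_evalE hornerC !hornerX hornerC.
Qed.

Lemma eval2_morph_resolvent_lead (c1 c2 : C) :
  eval2_morph c1 c2 (resolvent_lead 'X%:P) = resolvent_lead c1.
Proof.
rewrite /resolvent_lead; case: ifP => _; first by rewrite rmorphMn eval2_morph_X1.
by rewrite rmorphB !rmorphXn rmorphN1.
Qed.

Lemma eval2_morph_discriminant (c1 c2 : C) : c1 != 0 ->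
  eval2_morph c1 c2 (resultant generic_resolvent generic_resolvent^`())
  = resultant (resolvent c1 c2) (resolvent c1 c2)^`().
Proof.
move=> c1_neq0; set f := eval2_morph c1 c2.
have lead_f : f (resolvent_lead 'X%:P) != 0.
  by rewrite eval2_morph_resolvent_lead resolvent_lead_neq0.
have lead_neq0 : resolvent_lead ('X%:P : {poly {poly C}}) != 0.
  by apply: contraNneq lead_f => ->; rewrite rmorph0.
have [sizeG leadG] :=
  size_lead_coef_subZXn lead_neq0 (size_resolvent_sub_lead 'X%:P 'X).
have lead_f_deriv : f (resolvent_lead 'X%:P *+ resolvent_deg) != 0.
  by rewrite rmorphMn mulrn_eq0 negb_or lead_f -lt0n resolvent_deg_gt0.
have lead_deriv :
    lead_coef generic_resolvent^`() = resolvent_lead 'X%:P *+ resolvent_deg.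
  rewrite lead_coef_deriv /generic_resolvent sizeG leadG //.
  by apply: contraNneq lead_f_deriv => ->; rewrite rmorph0.
rewrite map_resultant /generic_resolvent ?leadG // -/generic_resolvent ?lead_deriv //.
by rewrite -deriv_map map_generic_resolvent.
Qed.

Lemma eval2_morph_exceptional_poly (c1 c2 : C) : c1 != 0 ->
  eval2_morph c1 c2 exceptional_poly
  = resultant (resolvent c1 c2) (resolvent c1 c2)^`() * c1 * (c1 ^+ b2 - c2 ^+ b1).
Proof.
move=> c1_neq0; rewrite /exceptional_poly !rmorphM rmorphB !rmorphXn.
by rewrite eval2_morph_discriminant // eval2_morph_X1 eval2_morph_X2.
Qed.

Lemma exceptional_poly_neq0 : exceptional_poly != 0.
Proof.
have sep := separable_resolvent_1_0 C.
have F_neq0 := separable_poly_neq0 sep.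
move: sep; rewrite unlock /separable_poly (coprimep_resultant _ F_neq0) => res_neq0.
have := eval2_morph_exceptional_poly 1 0 (oner_neq0 C).
rewrite expr1n expr0n (gtn_eqF b1_gt0) subr0 !mulr1 => evalE.
by apply: contraNneq res_neq0 => exc0; rewrite -evalE exc0 rmorph0.
Qed.

Lemma num_solutions_generic (c1 c2 : C) : eval2 exceptional_poly c1 c2 != 0 ->
  num_solutions_eq a1 a2 c1 c2 (g * resolvent_deg).
Proof.
rewrite -eval2_morphE; have [-> | c1_neq0] := eqVneq c1 0.
  by rewrite /exceptional_poly !rmorphM eval2_morph_X1 mulr0 mul0r eqxx.
rewrite eval2_morph_exceptional_poly // !mulf_eq0 !negb_or subr_eq0.
move=> /andP[/andP[res_neq0 _] c12].
have [size_F _] := size_lead_coef_subZXn (resolvent_lead_neq0 c1_neq0)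
  (size_resolvent_sub_lead c1 c2).
have F_neq0 : resolvent c1 c2 != 0 by rewrite -size_poly_gt0 size_F.
have sepF : separable_poly (resolvent c1 c2).
  by rewrite unlock /separable_poly (coprimep_resultant _ F_neq0).
by have := num_solutions_resolvent sepF c12; rewrite size_F.
Qed.

Lemma gcdn_mul_resolvent_deg :
  (g * resolvent_deg = if odd b1 && odd b2 then a1 * (a2 - g) else a1 * a2)%N.
Proof.
rewrite /resolvent_deg a2E; case: ifP => _; last by ring.
by rewrite -[X in (_ - X)%N]mul1n -mulnBl subn1; ring.
Qed.

End Resolvent.

Theorem proposition3p3 (a1 a2 : nat) (h1 : (0 < a1)%N) (h12 : (a1 < a2)%N) :
  let g := gcdn a1 a2 in
  generically (fun c1 c2 => num_solutions_eq a1 a2 c1 c2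
    (if odd (a1 %/ g) && odd (a2 %/ g) then a1 * (a2 - g) else a1 * a2)%N).
Proof.
move=> g; exists (exceptional_poly a1 a2); split; first exact: exceptional_poly_neq0.
move=> c1 c2 /(num_solutions_generic _ _ h1 h12).
by rewrite gcdn_mul_resolvent_deg.
Qed.
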